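(* For every $n\in\mathbb{N}$: (1) there exist a modal space $\boldsymbol{X}$, a clean map $\boldsymbol{f}$ on $\boldsymbol{X}$ induced by a finite, static multi-pointed action model that is not Boolean, and a point $\boldsymbol{x}\in\boldsymbol{X}$ whose orbit $\mathcal{O}_{\boldsymbol{f}}(\boldsymbol{x})$ is periodic with period $n$; and (2) the same holds with a clean map induced by a finite, Boolean multi-pointed action model that is not static.
   Context: Setting: atom set $\Phi$, finite agent set $I$, modal language $\mathcal{L}$ ($\varphi::=\top\mid p\mid\neg\varphi\mid\varphi\wedge\varphi\mid\square_i\varphi$), logic $\Lambda$ a normal modal logic extending $K$. For a set $X$ of pointed Kripke models (countable nonempty state sets, standard semantics), the $\boldsymbol{\mathcal{L}}_\Lambda$ modal space is $\boldsymbol{X}=\{\boldsymbol{x}:x\in X\}$, $\boldsymbol{x}=\{y\in X:y,x\text{ satisfy the same formulas}\}$. Clean map: induced via product update $x\mapsto x\otimes\Sigma\Gamma$ by a multi-pointed action model $\Sigma\Gamma=(\llbracket\Sigma\rrbracket,\mathsf{R},pre,post,\Gamma)$ (countable action set, relations $\mathsf{R}_i$, preconditions in $\mathcal{L}$, postconditions $\top$ or conjunctions of literals over $\Phi$, designated set $\emptyset\ne\Gamma\subseteq\llbracket\Sigma\rrbracket$) that is precondition finite, exhaustive, deterministic and closing over $X$ (every $x\in X$ satisfies $pre(\sigma)$ for exactly one $\sigma\in\Gamma$, finitely many preconditions up to $\Lambda$-equivalence, and $x\otimes\Sigma\Gamma\in X$). Product update: states $(s,\sigma)$ with $Ms\vDash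 pre(\sigma)$, relations componentwise, $p$ true at $(s,\sigma)$ iff $post(\sigma)\vDash p$, or $s\in\llbracket p\rrbracket$ and $post(\sigma)\nvDash\neg p$; designated state $(s,\sigma)$ for the applicable $\sigma\in\Gamma$. $\boldsymbol{f}(\boldsymbol{x})$ is the class of $x\otimes\Sigma\Gamma$. $\Sigma\Gamma$ is finite if $\llbracket\Sigma\rrbracket$ is finite, Boolean if every precondition is modality-free, static if every postcondition is $\top$. Orbit $\mathcal{O}_{\boldsymbol{f}}(\boldsymbol{x})=\{\boldsymbol{f}^m(\boldsymbol{x}):m\in\mathbb{N}_0\}$ is periodic if $\boldsymbol{f}^{m+k}(\boldsymbol{x})=\boldsymbol{f}^m(\boldsymbol{x})$ for some $m\ge0,k>0$; the least such $k$ is its period. *)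

From HB Require Import structures.
From Stdlib Require List ProofIrrelevance.
From mathcomp Require Import all_boot.

Section Modal.
Variables (Atom : Type) (Agent : finType).

Inductive form : Type :=
| FTop
| FVar (p : Atom)
| FNeg (f : form)
| FAnd (f g : form)
| FBox (i : Agent) (f : form).

Definition countable_type (T : Type) : Prop := exists f : T -> nat, injective f.

Record kmodel : Type := KModel {
  kst : Type;
  kst_countable : countable_type kst;
  krel : Agent -> kst -> kst -> Prop;
  kval : Atom -> kst -> Prop }.

Record pmodel : Type := PModel { pm_model : kmodel; pm_pt : kst pm_model }.

Fixpoint sat (M : kmodel) (s : kst M) (phi : form) : Prop :=
  match phi with
  | FTop => True
  | FVar p => kval M p s
  | FNeg f => ~ sat M s f
  | FAnd f g => sat M s f /\ sat M s g
  | FBox i f => forall t, krel M i s t -> sat M t f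
  end.

Definition psat (x : pmodel) (phi : form) : Prop := sat (pm_model x) (pm_pt x) phi.

(* x and y satisfy the same formulas, i.e. they have the same class in the
   modal space *)
Definition modal_equiv (x y : pmodel) : Prop := forall phi, psat x phi <-> psat y phi.

Fixpoint modality_free (phi : form) : Prop :=
  match phi with
  | FTop => True
  | FVar _ => True
  | FNeg f => modality_free f
  | FAnd f g => modality_free f /\ modality_free g
  | FBox _ _ => False
  end.

(* Postconditions: a conjunction of literals, given as a list of literals
   (p, true) = p, (p, false) = ~p; the empty list is the postcondition T. *)
Definition postcond := seq (Atom * bool).

Definition post_entails (l : postcond) (p : Atom) (b : bool) : Prop :=
  forall v : Atom -> bool, (forall a c, List.In (a, c) l -> v a = c) -> v p = b.

Record action_model (Sig : finType) : Type := AModel {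
  arel : Agent -> Sig -> Sig -> Prop;
  apre : Sig -> form;
  apost : Sig -> postcond;
  adesig : Sig -> Prop }.
Arguments arel {Sig}. Arguments apre {Sig}. Arguments apost {Sig}.
Arguments adesig {Sig}.

Section ProductUpdate.
Variables (Sig : finType) (A : action_model Sig).

Definition pu_state (M : kmodel) : Type :=
  {p : kst M * Sig | sat M p.1 (apre A p.2)}.

Lemma pu_countable (M : kmodel) : countable_type (pu_state M).
Proof.
case: (kst_countable M) => f finj.
exists (fun u : pu_state M => pickle (f (sval u).1, pickle (sval u).2)).
move=> u v /(pcan_inj pickleK) [] /finj e1 /(pcan_inj pickleK) e2.
case: u e1 e2 => [[a b] hu]; case: v => [[c d] hv] /= e1 e2.
subst c d; congr exist; exact: ProofIrrelevance.proof_irrelevance.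
Qed.

Definition pu_model (M : kmodel) : kmodel :=
  @KModel (pu_state M) (pu_countable M)
    (fun i (u v : pu_state M) =>
       krel M i (sval u).1 (sval v).1 /\ arel A i (sval u).2 (sval v).2)
    (fun p (u : pu_state M) =>
       post_entails (apost A (sval u).2) p true \/
       (kval M p (sval u).1 /\ ~ post_entails (apost A (sval u).2) p false)).

Definition pu_point (x : pmodel) (s : Sig) (h : psat x (apre A s)) : pmodel :=
  @PModel (pu_model (pm_model x))
          (exist (fun p : kst (pm_model x) * Sig => sat (pm_model x) p.1 (apre A p.2))
                 (pm_pt x, s) h).
Arguments pu_point {x s}.

Definition updates (x y : pmodel) : Prop :=
  exists s, adesig A s /\ exists h : psat x (apre A s), y = pu_point h.

Definition exhaustive_deterministic (X : pmodel -> Prop) : Prop :=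
  forall x, X x -> exists! s, adesig A s /\ psat x (apre A s).

(* finitely many preconditions (here even up to syntactic identity, which
   implies finiteness up to Lambda-equivalence for every logic Lambda) *)
Definition precondition_finite : Prop :=
  exists L : seq form, forall s, List.In (apre A s) L.

Definition closing (X : pmodel -> Prop) : Prop :=
  forall x s (h : psat x (apre A s)), X x -> adesig A s -> X (pu_point h).

Definition clean (X : pmodel -> Prop) : Prop :=
  (exists s, adesig A s) /\ precondition_finite /\
  exhaustive_deterministic X /\ closing X.

Definition static : Prop := forall s, apost A s = [::].
Definition boolean : Prop := forall s, modality_free (apre A s).

(* xs m is a representative of f^m(class of x) *)
Definition trajectory (x : pmodel) (xs : nat -> pmodel) : Prop :=
  xs 0 = x /\ forall k, updates (xs k) (xs k.+1).

Definition orbit_period (x : pmodel) (n : nat) : Prop :=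
  exists xs, trajectory x xs /\
    (0 < n /\ exists m, modal_equiv (xs (m + n)) (xs m)) /\
    (forall k m, 0 < k < n -> ~ modal_equiv (xs (m + k)) (xs m)).

End ProductUpdate.
End Modal.

Arguments FTop {Atom Agent}.
Arguments clean {Atom Agent Sig}.
Arguments static {Atom Agent Sig}.
Arguments boolean {Atom Agent Sig}.
Arguments orbit_period {Atom Agent Sig}.
Arguments updates {Atom Agent Sig}.
Arguments trajectory {Atom Agent Sig}.

From mathcomp Require Import all_boot zify.
From Stdlib Require Import Classical ClassicalEpsilon.

(* In both parts a family of rooted models K 0, ..., K (n - 1) encodes j < n at
   the root, the action model sends K j to a model bisimilar to K (j + 1 mod n),
   and the K j are pairwise modally distinct.  Since product update preserves
   bisimilarity and bisimilar points satisfy the same formulas, the orbit of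
   K 0 then has period exactly n.

   Static case: the root of K j sees a reflexive loop and a chain of length j.
   The designated action reads j off the formula "some successor has depth
   exactly j"; the remaining actions, whose precondition "depth >= n" keeps
   the old chain out, unfold the loop into a chain of length j + 1 mod n.

   Boolean case: the root of K j sees, as chains read through one atom, every
   word of length between 1 and n - 1 and the word of length n whose only 1 is
   at position j.  The action model rotates each word by one letter: every
   letter is written one step later and the first output guesses the last
   letter; a wrong guess kills the run at position n - 1, which only produces
   a shorter word, already present. *)

Lemma post_entails_nil {Atom : Type} (a : Atom) c : ~ post_entails Atom [::] a c.
Proof. by move=> /(_ (fun _ => ~~ c) (fun _ _ => False_ind _)); case: c. Qed.

Lemma post_entails_single {Atom : Type} (p a : Atom) b c :
  post_entails Atom [:: (p, b)] a c <-> a = p /\ b = c.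
Proof.
split=> [H|[-> <-] v /(_ p b (or_introl erefl)) //].
pose v x := if excluded_middle_informative (x = p) then b else ~~ c.
have : v a = c.
  apply: H => _ _ [[<- <-]|[]].
  by rewrite /v; destruct (excluded_middle_informative (p = p)).
rewrite /v; destruct (excluded_middle_informative (a = p)) as [ap|]; first by split.
by case: (c).
Qed.

Section Modal.
Variables (Atom : Type) (Agent : finType).

Local Notation form := (form Atom Agent).
Local Notation kmodel := (kmodel Atom Agent).
Local Notation pmodel := (pmodel Atom Agent).
Local Notation kst := (kst Atom Agent).
Local Notation krel := (krel Atom Agent).
Local Notation kval := (kval Atom Agent).
Local Notation sat := (sat Atom Agent).
Local Notation psat := (psat Atom Agent).
Local Notation pm_model := (pm_model Atom Agent).
Local Notation pm_pt := (pm_pt Atom Agent).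
Local Notation modal_equiv := (modal_equiv Atom Agent).

Definition dia (i : Agent) (f : form) : form :=
  FNeg Atom Agent (FBox Atom Agent i (FNeg Atom Agent f)).

Lemma sat_dia M s i f : sat M s (dia i f) <-> exists2 t, krel M i s t & sat M t f.
Proof.
split=> [H|[t Rst Ht] H]; last exact: H t Rst Ht.
by apply: NNPP => nex; apply: H => t Rst Ht; apply: nex; exists t.
Qed.

Definition bisim_at (M N : kmodel) (Z : kst M -> kst N -> Prop) s t : Prop :=
  (forall p, kval M p s <-> kval N p t) /\
  (forall i s', krel M i s s' -> exists2 t', krel N i t t' & Z s' t') /\
  (forall i t', krel N i t t' -> exists2 s', krel M i s s' & Z s' t').

Definition bisim (M N : kmodel) (Z : kst M -> kst N -> Prop) : Prop :=
  forall s t, Z s t -> bisim_at M N Z s t.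

Lemma bisim_sat {M N Z} phi {s t} : bisim M N Z -> Z s t -> (sat M s phi <-> sat N t phi).
Proof.
move=> B; elim: phi s t => [|p|f IH|f IHf g IHg|i f IH] s t Zst //=.
- by case: (B s t Zst).
- by rewrite (IH s t Zst).
- by rewrite (IHf s t Zst) (IHg s t Zst).
- have [_ [forth back]] := B s t Zst; split=> H u Ru.
  + by have [s' Rs' Z'] := back i u Ru; apply/(IH s' u Z')/H.
  + by have [t' Rt' Z'] := forth i u Ru; apply/(IH u t' Z')/H.
Qed.

Lemma bisim_eq M : bisim M M eq.
Proof. by move=> s _ <-; split=> //; split=> i s' R; exists s'. Qed.

Lemma bisim_comp M N L Z1 Z2 : bisim M N Z1 -> bisim N L Z2 ->
  bisim M L (fun s u => exists2 t, Z1 s t & Z2 t u).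
Proof.
move=> B1 B2 s u [t Z1st Z2tu].
have [V1 [F1 K1]] := B1 s t Z1st; have [V2 [F2 K2]] := B2 t u Z2tu.
split; first by move=> p; rewrite V1 V2.
split=> i.
- move=> s' /F1 [t' /F2 [u' R Z2'] Z1']; by exists u'; last exists t'.
- move=> u' /K2 [t' /K1 [s' R Z1'] Z2']; by exists s'; last exists t'.
Qed.

Definition pbisim (x y : pmodel) : Prop :=
  exists2 Z, bisim (pm_model x) (pm_model y) Z & Z (pm_pt x) (pm_pt y).

Lemma pbisim_refl x : pbisim x x.
Proof. by exists eq; first exact: bisim_eq. Qed.

Lemma pbisim_trans {x y z} : pbisim x y -> pbisim y z -> pbisim x z.
Proof.
by move=> [Z1 B1 Z1xy] [Z2 B2 Z2yz]; exists (fun s u => exists2 t, Z1 s t & Z2 t u);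
  [exact: bisim_comp | exists (pm_pt y)].
Qed.

Lemma pbisim_modal_equiv {x y} : pbisim x y -> modal_equiv x y.
Proof. by move=> [Z B Zxy] phi; exact: (bisim_sat phi B Zxy). Qed.

Definition dian (i : Agent) (m : nat) (f : form) : form := iter m (dia i) f.

Lemma dianS i m f : dian i m.+1 f = dia i (dian i m f).
Proof. by []. Qed.

Lemma dian_not_modality_free i m f : 0 < m -> ~ modality_free Atom Agent (dian i m f).
Proof. by case: m => // m _ []. Qed.

Section ProductUpdate.
Variables (Sig : finType) (A : action_model Atom Agent Sig).

Local Notation pu := (pu_model Atom Agent Sig A).
Local Notation apre := (apre Atom Agent Sig A).
Local Notation apost := (apost Atom Agent Sig A).
Local Notation pu_point := (pu_point Atom Agent Sig A).
Local Notation updates := (updates A).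

Definition pu_elem {M s a} (h : sat M s (apre a)) : kst (pu M) := exist _ (s, a) h.

Lemma kval_pu_elematic M p (u : kst (pu M)) :
  apost (sval u).2 = [::] -> (kval (pu M) p u <-> kval M p (sval u).1).
Proof.
move=> /= ->; split=> [[H|[]] //|H]; first by case: (post_entails_nil _ _ H).
by right; split=> //; exact: post_entails_nil.
Qed.

Lemma kval_pu_assign M p q b (u : kst (pu M)) :
  apost (sval u).2 = [:: (q, b)] ->
  (kval (pu M) p u <-> p = q /\ b \/ p <> q /\ kval M p (sval u).1).
Proof.
move=> /= ->; rewrite !post_entails_single.
split=> [[[-> ->]|[H nqb]]|[[-> ->]|[npq H]]]; [by left | | by left | by right; split=> // -[]].
have [epq|npq] := classic (p = q); [left | by right].
by split=> //; case: b nqb => // /(_ (conj epq erefl)).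
Qed.

Definition pu_lift {M N} (Z : kst M -> kst N -> Prop) (u : kst (pu M)) (v : kst (pu N)) :=
  Z (sval u).1 (sval v).1 /\ (sval u).2 = (sval v).2.

Lemma bisim_pu M N Z : bisim M N Z -> bisim (pu M) (pu N) (pu_lift Z).
Proof.
move=> B [[s a] hs] [[t b] ht] [/= Zst eab]; subst b.
have [V [forth back]] := B s t Zst.
split; first by move=> p /=; rewrite V.
split=> i.
- move=> [[s' a'] hs'] [/= /forth [t' Rt' Z'] Ra].
  have ht' : sat N t' (apre a') by apply/(bisim_sat _ B Z').
  by exists (pu_elem ht').
- move=> [[t' a'] ht'] [/= /back [s' Rs' Z'] Ra].
  have hs' : sat M s' (apre a') by apply/(bisim_sat _ B Z').
  by exists (pu_elem hs').
Qed.

Lemma pbisim_pu {x y a} (hx : psat x (apre a)) (hy : psat y (apre a)) :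
  pbisim x y -> pbisim (pu_point x a hx) (pu_point y a hy).
Proof. by move=> [Z B Zxy]; exists (pu_lift Z); [exact: bisim_pu|]. Qed.

Lemma precondition_finite_fin : precondition_finite Atom Agent Sig A.
Proof.
exists [seq apre a | a <- enum Sig] => a; apply: List.in_map.
have : a \in enum Sig by rewrite mem_enum.
by elim: (enum Sig) => //= b s IH; rewrite in_cons => /orP [/eqP ->|/IH]; [left|right].
Qed.

Section Orbit.
Variables (n : nat) (K : nat -> pmodel).
Hypothesis n_gt0 : 0 < n.
Hypothesis K_deterministic :
  forall j, j < n -> exists! a, adesig Atom Agent Sig A a /\ psat (K j) (apre a).
Hypothesis K_step : forall j a (h : psat (K j) (apre a)),
  j < n -> adesig Atom Agent Sig A a -> pbisim (pu_point (K j) a h) (K (j.+1 %% n)).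
Hypothesis K_distinct :
  forall i j, i < n -> j < n -> modal_equiv (K i) (K j) -> i = j.

Definition orbit_space (y : pmodel) : Prop := exists2 j, j < n & pbisim y (K j).

Lemma pbisim_updates j y z :
  j < n -> pbisim y (K j) -> updates y z -> pbisim z (K (j.+1 %% n)).
Proof.
move=> jn yK [a [da [h ->]]].
have h' : psat (K j) (apre a) by exact: (pbisim_modal_equiv yK _).1 h.
exact: pbisim_trans (pbisim_pu h h' yK) (K_step _ _ h' jn da).
Qed.

Lemma orbit_space_updates y : orbit_space y -> exists z, updates y z.
Proof.
move=> [j jn yK]; have [a [[da ha] _]] := K_deterministic _ jn.
have hy : psat y (apre a) by exact: (pbisim_modal_equiv yK _).2 ha.
by exists (pu_point y a hy), a; split=> //; exists hy.
Qed.

Lemma clean_orbit_space : clean A orbit_space.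
Proof.
split; first by have [a [[da _] _]] := K_deterministic _ n_gt0; exists a.
split; first exact: precondition_finite_fin.
split.
- move=> y [j jn yK]; have [a [[da ha] a_uniq]] := K_deterministic _ jn.
  exists a; split; first by split=> //; exact: (pbisim_modal_equiv yK _).2 ha.
  by move=> b [db hb]; apply: a_uniq; split=> //; exact: (pbisim_modal_equiv yK _).1 hb.
- move=> y a h [j jn yK] da; exists (j.+1 %% n); first by rewrite ltn_pmod.
  by apply: pbisim_updates jn yK _; exists a; split=> //; exists h.
Qed.

Lemma orbit_space_K0 : orbit_space (K 0).
Proof. by exists 0; last exact: pbisim_refl. Qed.

Definition next_point (y : pmodel) : pmodel := epsilon (inhabits y) (updates y).

Lemma updates_next_point {y} : orbit_space y -> updates y (next_point y).
Proof. by move=> /orbit_space_updates; apply: epsilon_spec. Qed.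

Lemma pbisim_iter_next_point k : pbisim (iter k next_point (K 0)) (K (k %% n)).
Proof.
elim: k => [|k IH]; first by rewrite mod0n; exact: pbisim_refl.
have kn : k %% n < n by rewrite ltn_pmod.
have step : updates (iter k next_point (K 0)) (next_point (iter k next_point (K 0))).
  by apply: updates_next_point; exists (k %% n).
by rewrite iterS -addn1 -modnDml addn1; exact: pbisim_updates kn IH step.
Qed.

Lemma orbit_period_K0 : orbit_period A (K 0) n.
Proof.
pose xs k := iter k next_point (K 0).
have xsK k : modal_equiv (xs k) (K (k %% n)).
  exact: pbisim_modal_equiv (pbisim_iter_next_point k).
exists xs; split.
  split=> // k; apply: updates_next_point.
  by exists (k %% n); [rewrite ltn_pmod | exact: pbisim_iter_next_point].
split.
  by split=> //; exists 0 => phi; rewrite add0n xsK modnn.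
move=> k m /andP [k_gt0 kn] E.
have /eqP : (m + k) %% n = (m + 0) %% n.
  apply: K_distinct; rewrite ?ltn_pmod //.
  by move=> phi; rewrite addn0 -xsK E xsK.
by rewrite eqn_modDl mod0n modn_small // => /eqP; lia.
Qed.

End Orbit.

End ProductUpdate.

Local Notation FAnd := (FAnd Atom Agent).
Local Notation FNeg := (FNeg Atom Agent).

Section StaticOrbit.
Variables (i : Agent) (n : nat).

Local Notation dia := (dia i).
Local Notation dian := (dian i).

Definition succ_of_depth (a : nat) : form :=
  dia (FAnd (dian a FTop) (FNeg (dian a.+1 FTop))).

Inductive dstate := ds_root | ds_loop | ds_chain of nat.

Lemma dstate_countable : countable_type dstate.
Proof.
exists (fun s => if s is ds_chain c then c.+2 else if s is ds_loop then 1 else 0).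
by case=> [|| c] [|| d] // [->].
Qed.

Definition depth_rel (j : nat) (s t : dstate) : Prop :=
  match s, t with
  | ds_root, ds_loop | ds_loop, ds_loop => True
  | ds_root, ds_chain c => c = j
  | ds_chain c, ds_chain c' => c = c'.+1
  | _, _ => False
  end.

Definition depth_model (j : nat) : kmodel :=
  KModel Atom Agent dstate dstate_countable (fun _ => depth_rel j) (fun _ _ => False).

Lemma sat_loop_dian j m : sat (depth_model j) ds_loop (dian m FTop).
Proof. by elim: m => // m IH; rewrite dianS sat_dia; exists ds_loop. Qed.

Lemma sat_chain_dian j c m : sat (depth_model j) (ds_chain c) (dian m FTop) <-> m <= c.
Proof.
elim: m c => [|m IH] c; first by [].
rewrite dianS sat_dia; split.
- by case=> -[||c'] //= -> /IH.
- by case: c => // c /IH ?; exists (ds_chain c).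
Qed.

Lemma sat_succ_of_depth j a : sat (depth_model j) ds_root (succ_of_depth a) <-> a = j.
Proof.
rewrite sat_dia; split.
- case=> -[||c] R [Hd Hnd]; first by case: R.
    by case: (Hnd (sat_loop_dian j a.+1)).
  move: R => /= ec; subst c; move/sat_chain_dian: Hd => ?.
  suff : ~ a.+1 <= j by lia.
  by move=> ?; apply: Hnd; apply: (sat_chain_dian j j a.+1).2.
- move=> ->; exists (ds_chain j) => //; split; first exact: (sat_chain_dian j j j).2.
  by move/(sat_chain_dian j j j.+1); lia.
Qed.

(* [inl j] acts on the root of [depth_model j], [inr None] on the loop, and
   [inr (Some m)] copies the loop into the node of depth [m] of a new chain. *)
Definition static_act : finType := ('I_n + option 'I_n)%type.

Definition static_arel (a b : static_act) : Prop :=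
  match a, b with
  | inl _, inr None | inr None, inr None => True
  | inl j, inr (Some m) => m = j.+1 %% n :> nat
  | inr (Some m), inr (Some m') => m = m'.+1 :> nat
  | _, _ => False
  end.

Definition static_pre (a : static_act) : form :=
  if a is inl j then succ_of_depth j else dian n FTop.

Definition static_am : action_model Atom Agent static_act :=
  AModel Atom Agent static_act (fun _ => static_arel) static_pre (fun _ => [::])
    (fun a => if a is inl _ then True else False).

Local Notation pu := (pu_model Atom Agent static_act static_am).
Local Notation pu_elem := (pu_elem static_act static_am).

Definition static_step_rel j (u : kst (pu (depth_model j))) (v : dstate) : Prop :=
  match sval u with
  | (ds_root, inl _) => v = ds_root
  | (ds_loop, inr None) => v = ds_loop
  | (ds_loop, inr (Some m)) => v = ds_chain m
  | _ => False
  end.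

Lemma bisim_static_step j : j < n ->
  bisim (pu (depth_model j)) (depth_model (j.+1 %% n)) (static_step_rel j).
Proof.
move=> jn [[s a] h] v Zuv; split; first by move=> p; rewrite kval_pu_elematic.
have loop_pre x : sat (depth_model j) ds_loop (static_pre (inr x)) := sat_loop_dian j n.
case: s a h Zuv => [|| c] [a|[m|]] h //= ->; split=> k.
- move: h => /sat_succ_of_depth ->.
  move=> [[[|| c] [b|[m|]]] h'] [] //= R Rb.
  + by exists (ds_chain m); rewrite //= Rb.
  + by exists ds_loop.
  + by move: R => /= ec; subst c; have := (sat_chain_dian j j n).1 h'; lia.
  + by move: R => /= ec; subst c; have := (sat_chain_dian j j n).1 h'; lia.
- move: h => /sat_succ_of_depth ->.
  case=> [|| c] //= R; first by exists (pu_elem (loop_pre None)).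
  have cn : c < n by rewrite R ltn_pmod //; lia.
  by exists (pu_elem (loop_pre (Some (Ordinal cn)))).
- move=> [[[|| c] [b|[m'|]]] h'] [] //= R Rb.
  by exists (ds_chain m'); rewrite //= Rb.
- case=> [|| c] //= R.
  have cn : c < n by rewrite (leq_trans _ (ltn_ord m)) // R.
  by exists (pu_elem (loop_pre (Some (Ordinal cn)))).
- move=> [[[|| c] [b|[m'|]]] h'] [] //= R Rb.
  by exists ds_loop.
- case=> [|| c] //= _.
  by exists (pu_elem (loop_pre None)).
Qed.

Definition depth_point (j : nat) : pmodel := PModel Atom Agent (depth_model j) ds_root.

Lemma static_deterministic j : j < n ->
  exists! a, adesig Atom Agent static_act static_am a /\ psat (depth_point j) (static_pre a).
Proof.
move=> jn; exists (inl (Ordinal jn)); split; first by split=> //; exact/sat_succ_of_depth.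
case=> [a [_ ha]|_ [[]]]; suff -> : a = Ordinal jn by [].
by apply: val_inj; exact: (sat_succ_of_depth j a).1 ha.
Qed.

Lemma static_step j a (h : psat (depth_point j) (static_pre a)) :
  j < n -> adesig Atom Agent static_act static_am a ->
  pbisim (pu_point Atom Agent static_act static_am (depth_point j) a h)
         (depth_point (j.+1 %% n)).
Proof.
by move=> jn; case: a h => // a h _; exists (static_step_rel j); first exact: bisim_static_step.
Qed.

Lemma depth_point_inj a j : modal_equiv (depth_point a) (depth_point j) -> a = j.
Proof.
move=> /(_ (succ_of_depth a)) [+ _] => /(_ ((sat_succ_of_depth a a).2 erefl)).
exact: (sat_succ_of_depth j a).1.
Qed.

End StaticOrbit.

Local Notation FVar := (FVar Atom Agent).

Lemma belast_take (T : Type) (x : T) s : belast x s = take (size s) (x :: s).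
Proof. by elim: s x => [|y s IH] x //=; rewrite IH. Qed.

Section BooleanOrbit.
Variables (p : Atom) (i : Agent) (n : nat).

Local Notation dia := (dia i).
Local Notation dian := (dian i).

Definition lit (b : bool) : form := if b then FVar p else FNeg (FVar p).

Definition onehot (j : nat) : seq bool := mkseq (fun t => t == j) n.

Lemma size_onehot j : size (onehot j) = n.
Proof. exact: size_mkseq. Qed.

Lemma onehot_rot j : j < n ->
  belast (last false (onehot j)) (onehot j) = onehot (j.+1 %% n).
Proof.
move=> jn; apply: (@eq_from_nth _ false); first by rewrite size_belast !size_onehot.
rewrite size_belast size_onehot => t tn.
rewrite [RHS]nth_mkseq // belast_take size_onehot nth_take // -nth_last size_onehot.
have [jl|->] : j < n.-1 \/ j = n.-1 by lia.
- rewrite modn_small; last by lia.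
  by case: t tn => [|t] tn /=; rewrite nth_mkseq; lia.
- rewrite prednK ?modnn; last by lia.
  by case: t tn => [|t] tn /=; rewrite nth_mkseq; lia.
Qed.

Inductive wstate := ws_root | ws_word of seq bool.

Lemma wstate_countable : countable_type wstate.
Proof.
exists (fun s => pickle (if s is ws_word u then Some u else None)).
by case=> [|u] [|v] /(pcan_inj pickleK) // [->].
Qed.

Definition root_word (j : nat) (u : seq bool) : Prop := 0 < size u < n \/ u = onehot j.

Definition word_rel (j : nat) (s t : wstate) : Prop :=
  match s, t with
  | ws_root, ws_word u => root_word j u
  | ws_word u, ws_word v => v = behead u /\ v <> [::]
  | _, _ => False
  end.

Definition word_val (q : Atom) (s : wstate) : Prop :=
  q = p /\ (if s is ws_word u then head false u else false).

Definition word_model (j : nat) : kmodel :=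
  KModel Atom Agent wstate wstate_countable (fun _ => word_rel j) word_val.

Lemma sat_lit j u b : sat (word_model j) (ws_word u) (lit b) <-> head false u = b.
Proof. by case: b; rewrite /= /word_val; case: (head false u); intuition congruence. Qed.

Lemma sat_word_dian {j m u f} : u <> [::] ->
  sat (word_model j) (ws_word u) (dian m f) <->
  m < size u /\ sat (word_model j) (ws_word (drop m u)) f.
Proof.
elim: m u => [|m IH] u u_nil; first by rewrite drop0; case: u u_nil => // x u _; split=> [|[]].
rewrite dianS sat_dia; split.
- case=> -[|v] R; first by case: R.
  move: R => /= [-> v_nil] /(IH _ v_nil) [mv Hf].
  by case: u u_nil v_nil mv Hf => // x u.
- case: u u_nil => [//|x v] _ [/= mv Hf].
  have v_nil : v <> [::] by case: v mv {Hf}.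
  by exists (ws_word v); last exact/IH.
Qed.

Lemma root_word_nil {j u} : 0 < n -> root_word j u -> u <> [::].
Proof.
move=> n_gt0 [/andP [+ _]|->]; first by case: u.
by move=> /(congr1 size) /=; rewrite size_onehot; lia.
Qed.

Definition onehot_probe (a : nat) : form := dia (FAnd (dian n.-1 FTop) (dian a (FVar p))).

Lemma sat_onehot_probe j a : j < n -> a < n ->
  sat (word_model j) ws_root (onehot_probe a) <-> a = j.
Proof.
move=> jn an; have n_gt0 : 0 < n by lia.
have head_drop b u : head false (drop b u) = nth false u b by rewrite -nth0 nth_drop addn0.
rewrite sat_dia; split.
- case=> -[|u] R [Hsz Ha]; first by case: R.
  have u_nil := root_word_nil n_gt0 R.
  move: Hsz Ha => /(sat_word_dian u_nil) [szu _] /(sat_word_dian u_nil) [_ [_]].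
  case: R => [/andP [_ ?]|->]; first by lia.
  by rewrite head_drop nth_mkseq // => /eqP.
- move=> ->; have u_nil : onehot j <> [::] := root_word_nil n_gt0 (or_intror erefl).
  exists (ws_word (onehot j)); first by right.
  split; apply/(sat_word_dian u_nil); rewrite size_onehot; split=> //; first by lia.
  by split=> //=; rewrite head_drop nth_mkseq // eqxx.
Qed.

(* [Some (k, o, g, x)] reads the letter [x] at position [k] and writes [o], the
   letter read at position [k - 1]; at position [0] it writes the guess [g] for
   the last letter, which is checked at position [n - 1]. *)
Definition bool_act : finType := option ('I_n * bool * bool * bool).

Definition bool_arel (a b : bool_act) : Prop :=
  match a, b with
  | None, Some (k, o, g, _) => k = 0 :> nat /\ o = g
  | Some (k, _, g, x), Some (k', o', g', _) => k' = k.+1 :> nat /\ o' = x /\ g' = g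
  | _, _ => False
  end.

Definition bool_pre (a : bool_act) : form :=
  if a is Some (k, _, g, x) then
    if (k == n.-1 :> nat) && (x != g) then FNeg FTop else lit x
  else FTop.

Definition bool_post (a : bool_act) : postcond Atom :=
  if a is Some (_, o, _, _) then [:: (p, o)] else [::].

Definition bool_am : action_model Atom Agent bool_act :=
  AModel Atom Agent bool_act (fun _ => bool_arel) bool_pre bool_post (fun a => a = None).

Lemma sat_bool_pre j u (k : 'I_n) o g x :
  sat (word_model j) (ws_word u) (bool_pre (Some (k, o, g, x))) <->
  head false u = x /\ ((k == n.-1 :> nat) ==> (x == g)).
Proof.
rewrite /bool_pre; case: ifP => [/andP [-> /negbTE ->]|].
  by split=> [/(_ I) []|[]].
by move/negbT; rewrite negb_and negbK sat_lit implybE => ->; split=> [->|[]].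
Qed.

Definition run_continues (k : nat) (g y : bool) : bool :=
  (k.+1 < n) && ((k.+1 != n.-1) || (y == g)).

(* The word written by the run that enters the chain [u] at position [k] with
   output [o] and guess [g]. *)
Fixpoint run_output (k : nat) (o g : bool) (u : seq bool) : seq bool :=
  if u is x :: u' then
    o :: (if u' is y :: _ then
            if run_continues k g y then run_output k.+1 x g u' else [::]
          else [::])
  else [::].

Lemma run_output_cons2 k o g x y u : run_output k o g [:: x, y & u] =
  o :: (if run_continues k g y then run_output k.+1 x g (y :: u) else [::]).
Proof. by []. Qed.

Lemma run_output_nil k o g u : u <> [::] -> run_output k o g u <> [::].
Proof. by case: u. Qed.

Lemma run_output_cons k o g x u : u <> [::] -> run_continues k g (head false u) ->
  run_output k o g (x :: u) = o :: run_output k.+1 x g u.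
Proof. by case: u => // y u _ /= ->. Qed.

Lemma run_output_short k o g u : k + size u < n -> run_output k o g u = belast o u.
Proof.
elim: u k o => [//|x [//|y u] IH] k o ksz; rewrite /= in ksz.
have cont : run_continues k g y by apply/andP; split; [lia | apply/orP; left; lia].
by rewrite run_output_cons2 cont IH //=; lia.
Qed.

Lemma run_output_full k o g u : u <> [::] -> k + size u = n -> last false u = g ->
  run_output k o g u = belast o u.
Proof.
elim: u k o => [//|x [//|y u] IH] k o _ ksz ul; rewrite /= in ksz ul.
have cont : run_continues k g y.
  apply/andP; split; first lia.
  by case: u {IH} ksz ul => [|z u] /= ksz ul; [rewrite ul eqxx orbT | apply/orP; left; lia].
by rewrite run_output_cons2 cont IH //=; lia.
Qed.

Lemma size_run_output_trunc k o g u : 1 < size u -> k + size u = n ->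
  last false u != g -> size (run_output k o g u) = (size u).-1.
Proof.
elim: u k o => [//|x [//|y [|z u]] IH] k o usz ksz ul; rewrite /= in usz ksz ul.
  have stop : run_continues k g y = false.
    by apply/negbTE; rewrite negb_and negb_or negbK ul andbT; apply/orP; right; lia.
  by rewrite run_output_cons2 stop.
have cont : run_continues k g y by apply/andP; split; [lia | apply/orP; left; lia].
rewrite run_output_cons2 cont.
transitivity (size (run_output k.+1 x g [:: y, z & u])).+1; first by [].
by rewrite IH //=; lia.
Qed.

Lemma root_word_run_output j u g : j < n -> root_word j u ->
  (0 == n.-1) ==> (head false u == g) -> root_word (j.+1 %% n) (run_output 0 g g u).
Proof.
move=> jn [short|->] admissible.
  by left; rewrite run_output_short ?size_belast //; case/andP: short.
have [lg|lg] := eqVneq (last false (onehot j)) g.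
  right; rewrite run_output_full ?size_onehot // -?onehot_rot -?lg //.
  by apply: (@root_word_nil j); [lia | right].
have n_gt1 : 1 < n.
  rewrite ltnNge; apply/negP => n_le1; have n1 : n = 1 by lia.
  by move: admissible lg; rewrite /onehot n1 /= => /eqP ->; rewrite eqxx.
left; rewrite size_run_output_trunc ?size_onehot //; lia.
Qed.

Lemma root_word_run_output_inv j v : j < n -> root_word (j.+1 %% n) v ->
  exists u g, [/\ root_word j u, (0 == n.-1) ==> (head false u == g) &
                  v = run_output 0 g g u].
Proof.
move=> jn [|->].
  case: v => [//|g v] /andP [_ vn]; exists (rcons v false), g.
  rewrite run_output_short ?belast_rcons ?size_rcons //.
  split=> //; first by left; rewrite size_rcons; apply/andP.
  by apply/implyP => /eqP n1; move: vn => /=; lia.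
exists (onehot j), (last false (onehot j)).
rewrite run_output_full ?onehot_rot ?size_onehot //; last first.
  by apply: (@root_word_nil j); [lia | right].
split=> //; first by right.
apply/implyP => /eqP n1; have n_eq1 : n = 1 by lia.
by rewrite /onehot n_eq1 /= eqxx.
Qed.

Local Notation pu := (pu_model Atom Agent bool_act bool_am).
Local Notation pu_elem := (pu_elem bool_act bool_am).

Definition bool_step_rel j (u : kst (pu (word_model j))) (v : wstate) : Prop :=
  match sval u with
  | (ws_root, None) => v = ws_root
  | (ws_word w, Some (k, o, g, _)) => w <> [::] /\ v = ws_word (run_output k o g w)
  | _ => False
  end.

Lemma bisim_at_bool_word j j' w (k : 'I_n) o g x v
    (h : sat (word_model j) (ws_word w) (bool_pre (Some (k, o, g, x)))) :
  w <> [::] -> v = run_output k o g w ->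
  bisim_at (pu (word_model j)) (word_model j') (bool_step_rel j) (pu_elem h) (ws_word v).
Proof.
case: w h => [//|x' w] h _ ev; have [/= ex _] := (sat_bool_pre _ _ _ _ _ _).1 h; subst x.
split; first by move=> q; rewrite kval_pu_assign // ev /= /word_val; intuition.
split=> l.
- move=> [[[|w'] [[[[k' o'] g'] y]|]] h'] [R Ra] //; case: R => /= ew w_nil.
  case: Ra => /= ek [eo eg]; subst w' o' g'.
  have [/= hy admissible] := (sat_bool_pre _ _ _ _ _ _).1 h'.
  have cont : run_continues k g (head false w).
    rewrite /run_continues -ek (ltn_ord k') hy /=.
    by case: (k' == n.-1 :> nat) admissible => //= ->; rewrite orbT.
  exists (ws_word (run_output k' x' g w)); last by [].
  by rewrite ev run_output_cons // -ek; split=> //; exact: run_output_nil.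
- case=> [//|v'] [ev' v_nil]; move: ev'; rewrite {}ev.
  case: w h v_nil => [h v_nil /= ev'|y w h v_nil]; first by subst.
  rewrite run_output_cons2; case cont: (run_continues k g y) => ev'; last by subst.
  have [kn admissible] := andP cont.
  have h' : sat (word_model j) (ws_word (y :: w))
      (bool_pre (Some (Ordinal kn, x', g, y))).
    apply/sat_bool_pre; split=> //; apply/implyP => /= /eqP kn1.
    by move: admissible; rewrite kn1 eqxx.
  by exists (pu_elem h'); last by split; last rewrite ev'.
Qed.

Lemma bisim_at_bool_root j (h : sat (word_model j) ws_root (bool_pre None)) :
  j < n -> bisim_at (pu (word_model j)) (word_model (j.+1 %% n)) (bool_step_rel j)
                    (pu_elem h) ws_root.
Proof.
move=> jn; have n_gt0 : 0 < n by lia.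
split; first by move=> q; rewrite kval_pu_elematic.
split=> l.
- move=> [[[|w] [[[[k o] g] x]|]] h'] [//= R [ek eo]]; subst o.
  have [/= hx admissible] := (sat_bool_pre _ _ _ _ _ _).1 h'.
  exists (ws_word (run_output k g g w)); last by split; [exact: root_word_nil R|].
  by rewrite /= ek; apply: root_word_run_output; rewrite // -ek hx.
- case=> [//|v] /= /(root_word_run_output_inv _ _ jn) [w [g [R admissible ->]]].
  have h' : sat (word_model j) (ws_word w) (bool_pre (Some (Ordinal n_gt0, g, g, head false w))).
    by apply/sat_bool_pre.
  by exists (pu_elem h'); last by split; [exact: root_word_nil R|].
Qed.

Lemma bisim_bool_step j : j < n ->
  bisim (pu (word_model j)) (word_model (j.+1 %% n)) (bool_step_rel j).
Proof.
move=> jn [[[|w] [[[[k o] g] x]|]] h] v //=.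
- by move=> ->; exact: bisim_at_bool_root.
- by move=> [w_nil ->]; exact: bisim_at_bool_word.
Qed.

Definition word_point (j : nat) : pmodel := PModel Atom Agent (word_model j) ws_root.

Lemma bool_deterministic j :
  exists! a, adesig Atom Agent bool_act bool_am a /\ psat (word_point j) (bool_pre a).
Proof. by exists None; split=> // a []. Qed.

Lemma bool_step j a (h : psat (word_point j) (bool_pre a)) :
  j < n -> adesig Atom Agent bool_act bool_am a ->
  pbisim (pu_point Atom Agent bool_act bool_am (word_point j) a h)
         (word_point (j.+1 %% n)).
Proof. by move=> jn /= ea; subst a; exists (bool_step_rel j); first exact: bisim_bool_step. Qed.

Lemma word_point_inj a j : a < n -> j < n ->
  modal_equiv (word_point a) (word_point j) -> a = j.
Proof.
move=> an jn /(_ (onehot_probe a)) [+ _].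
move=> /(_ ((sat_onehot_probe a a an an).2 erefl)).
exact: (sat_onehot_probe j a jn an).1.
Qed.

End BooleanOrbit.

End Modal.

Theorem proposition12 (Atom : Type) (Agent : finType)
  (atom_nonempty : inhabited Atom) (agent_nonempty : inhabited Agent)
  (n : nat) (hn : 0 < n) :
  (exists (X : pmodel Atom Agent -> Prop) (Sig : finType)
          (A : action_model Atom Agent Sig),
      clean A X /\ static A /\ ~ boolean A /\
      exists x, X x /\ orbit_period A x n)
  /\
  (exists (X : pmodel Atom Agent -> Prop) (Sig : finType)
          (A : action_model Atom Agent Sig),
      clean A X /\ boolean A /\ ~ static A /\
      exists x, X x /\ orbit_period A x n).
Proof.
case: atom_nonempty => p; case: agent_nonempty => i.
split.
- have det := static_deterministic Atom Agent i n.
  have step := static_step Atom Agent i n.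
  have inj a j (_ : a < n) (_ : j < n) := depth_point_inj Atom Agent i a j.
  exists (orbit_space Atom Agent n (depth_point Atom Agent)), _, (static_am Atom Agent i n).
  split; first exact: clean_orbit_space hn det step.
  split=> //; split; first by move=> /(_ (inr None)); exact: dian_not_modality_free.
  exists (depth_point Atom Agent 0); split; first exact: orbit_space_K0.
  exact: orbit_period_K0 hn det step inj.
- have det j (_ : j < n) := bool_deterministic Atom Agent p n j.
  have step := bool_step Atom Agent p n.
  have inj := word_point_inj Atom Agent p i n.
  exists (orbit_space Atom Agent n (word_point Atom Agent p n)), _, (bool_am Atom Agent p n).
  split; first exact: clean_orbit_space hn det step.
  split; first by case=> [[[[k o] g] x]|] //=; case: ifP => // _; case: x.
  split; first by move=> /(_ (Some (Ordinal hn, true, true, true))).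
  exists (word_point Atom Agent p n 0); split; first exact: orbit_space_K0.
  exact: orbit_period_K0 hn det step inj.
Qed.
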